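(* Let $G$ be a finite, simple, connected graph of order at least four with $\dim_{wt}(G)=2$, and let $\{u,v\}$ be a weak total metric basis of $G$. Then $u$ and $v$ are not twins in $G$. In fact, $G$ has no twin.
   Context: $d(x,y)$ is the shortest-path distance and $N(x)$ the set of neighbors of $x$. A set $W\subseteq V(G)$ is a resolving set if for every two distinct vertices $y,z$ there is $x\in W$ with $d(y,x)\ne d(z,x)$. A set $W$ is a weak total resolving set (WTR-set) if $W$ is resolving and, for every $w\in W$ and every $x\in V(G)\setminus W$, there is $w'\in W\setminus\{w\}$ with $d(x,w')\ne d(w,w')$. $\dim_{wt}(G)$ is the minimum cardinality of a WTR-set, and a weak total metric basis is a WTR-set of that cardinality. Two distinct vertices $u,v$ are twins if $N(u)\setminus\{v\}=N(v)\setminus\{u\}$; a vertex $u$ is a twin (and $G$ has a twin) if there exists $v\ne u$ such that $u,v$ are twins. *)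

From mathcomp Require Import all_boot.
Set Implicit Arguments. Unset Strict Implicit. Unset Printing Implicit Defensive.

Definition simple_graph (T : finType) (e : rel T) : Prop :=
  symmetric e /\ irreflexive e.

Definition connected_graph (T : finType) (e : rel T) : Prop :=
  forall x y : T, connect e x y.

Fixpoint walk_le (T : finType) (e : rel T) (n : nat) (x y : T) : bool :=
  match n with
  | 0 => x == y
  | k.+1 => walk_le e k x y || [exists z, walk_le e k x z && e z y]
  end.

(* shortest-path distance: least n with a walk of length <= n
   (in a connected graph this is < #|T|, so searching 0..#|T|-1 suffices;
   it equals #|T| iff y is unreachable from x) *)
Definition dist (T : finType) (e : rel T) (x y : T) : nat :=
  find (fun n => walk_le e n x y) (iota 0 #|T|).

Definition resolving (T : finType) (e : rel T) (W : {set T}) : Prop :=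
  forall y z : T, y != z -> exists2 x, x \in W & dist e y x != dist e z x.

Definition weak_total_resolving (T : finType) (e : rel T) (W : {set T}) : Prop :=
  resolving e W /\
  forall w x, w \in W -> x \notin W ->
    exists2 w', w' \in W :\ w & dist e x w' != dist e w w'.

Definition is_wt_dim (T : finType) (e : rel T) (k : nat) : Prop :=
  (exists W : {set T}, weak_total_resolving e W /\ #|W| = k) /\
  (forall W : {set T}, weak_total_resolving e W -> k <= #|W|).

Definition wt_metric_basis (T : finType) (e : rel T) (W : {set T}) : Prop :=
  weak_total_resolving e W /\
  (forall W' : {set T}, weak_total_resolving e W' -> #|W| <= #|W'|).

Definition nbhd (T : finType) (e : rel T) (x : T) : {set T} := [set y | e x y].

Definition twins (T : finType) (e : rel T) (u v : T) : Prop :=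
  u != v /\ nbhd e u :\ v = nbhd e v :\ u.

Definition is_twin (T : finType) (e : rel T) (u : T) : Prop :=
  exists v, twins e u v.

(* Twins a, b are at the same distance from every other vertex, so a
   resolving set must contain one of them; if the basis is {u, v} with
   u = a, the weak total condition at w = u and x = b forces b = v.  So
   the basis itself is a twin pair, and then the remaining vertices (at
   least two of them) have pairwise distinct positive distances to u,
   all different from d(v, u).  Following geodesics towards u, these
   distances fill an initial segment 1, 2, ..., and a common neighbour
   of the twins gives d(v, u) <= 2, which leaves no room for d(v, u). *)
From mathcomp Require Import all_boot.
From mathcomp Require Import zify.

Set Implicit Arguments.
Unset Strict Implicit.
Unset Printing Implicit Defensive.

Section GraphDistance.
Variables (T : finType) (e : rel T).

Lemma walk_cons n x z y : e x z -> walk_le e n z y -> walk_le e n.+1 x y.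
Proof.
move=> exz; elim: n y => [|n IH] y.
  by move/eqP<-; apply/orP; right; apply/existsP; exists x; rewrite /= eqxx.
case/orP=> [/IH wlk | /existsP [w /andP [/IH wlk ewy]]]; apply/orP; first by left.
by right; apply/existsP; exists w; apply/andP.
Qed.

Lemma walk_of_path x p : path e x p -> walk_le e (size p) x (last x p).
Proof.
elim: p x => [|z p IH] x /=; first by rewrite eqxx.
by case/andP=> exz /IH; apply: walk_cons.
Qed.

Lemma dist_le n x y : walk_le e n x y -> dist e x y <= n.
Proof.
rewrite /dist => wlk; case: (ltnP n #|T|) => [ltnT | leTn].
  rewrite leqNgt; apply/negP => /(before_find 0).
  by rewrite nth_iota // add0n wlk.
by apply: leq_trans (find_size _ _) _; rewrite size_iota.
Qed.

Hypothesis sym : symmetric e.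

Lemma walk_sym n x y : walk_le e n x y -> walk_le e n y x.
Proof.
elim: n x y => [|n IH] x y /=; first by rewrite eq_sym.
case/orP=> [/IH -> // | /existsP [z /andP [/IH wlk ezy]]].
by apply: walk_cons wlk; rewrite sym.
Qed.

Lemma walk_head n x y : walk_le e n.+1 x y ->
  walk_le e n x y \/ exists2 z, e x z & walk_le e n z y.
Proof.
move/walk_sym => /= /orP [/walk_sym | /existsP [z /andP [wlk ezx]]]; first by left.
by right; exists z; rewrite 1?sym // walk_sym.
Qed.

Hypothesis conn : connected_graph e.

Lemma dist_walk x y : walk_le e (dist e x y) x y.
Proof.
have [n ltnT wlk] : exists2 n, n < #|T| & walk_le e n x y.
  have /connectP [p pth ->] := conn x y.
  case/shortenP: pth => q pth uq _; exists (size q); last exact: walk_of_path.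
  by have := max_card (mem (x :: q)); rewrite (card_uniqP uq).
have hasw : has (fun k => walk_le e k x y) (iota 0 #|T|).
  by apply/hasP; exists n; rewrite ?mem_iota.
have := nth_find 0 hasw; rewrite /dist nth_iota ?add0n //.
by move: hasw; rewrite has_find size_iota.
Qed.

Lemma dist_sym x y : dist e x y = dist e y x.
Proof. by apply/eqP; rewrite eqn_leq !dist_le // walk_sym // dist_walk. Qed.

Lemma dist_eq0 x y : (dist e x y == 0) = (x == y).
Proof.
apply/eqP/eqP => [d0 | ->]; first by have := dist_walk x y; rewrite d0 => /eqP.
by apply/eqP; rewrite -leqn0 dist_le /=.
Qed.

Lemma dist_xx x : dist e x x = 0.
Proof. by apply/eqP; rewrite dist_eq0. Qed.

Lemma dist_adj_le x z y : e x z -> dist e x y <= (dist e z y).+1.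
Proof. by move=> exz; apply: dist_le; apply: walk_cons exz (dist_walk z y). Qed.

Lemma dist_pred_adj k x y : dist e x y = k.+1 -> exists2 z, e x z & dist e z y = k.
Proof.
move=> dxy; have := dist_walk x y; rewrite dxy => /walk_head [/dist_le | [z exz]].
  by rewrite dxy ltnn.
move/dist_le => dzy; exists z => //.
by have := dist_adj_le y exz; rewrite dxy; lia.
Qed.

Lemma dist_eq1 x y : dist e x y = 1 -> e x y.
Proof. by case/dist_pred_adj=> z exz /eqP; rewrite dist_eq0 => /eqP <-. Qed.

Section Twins.
Variables a b : T.
Hypothesis tw : twins e a b.

Lemma twins_sym : twins e b a.
Proof. by case: tw => ab nbh; split; rewrite // eq_sym. Qed.

Lemma twins_adj z : z != b -> e a z -> e b z.
Proof.
case: tw => _ nbh zb eaz; have : z \in nbhd e a :\ b by rewrite !inE zb eaz.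
by rewrite nbh !inE => /andP [].
Qed.

Lemma walk_twins n x : x != a -> walk_le e n x a -> walk_le e n x b.
Proof.
move=> xa; elim: n => [|n IH]; first by rewrite /= (negbTE xa).
case/orP=> [/IH wlk | /existsP [z /andP [wlk eza]]]; apply/orP; first by left.
have [<- | zb] := eqVneq z b; first by left.
right; apply/existsP; exists z; rewrite wlk sym twins_adj //.
by rewrite sym.
Qed.

End Twins.

Lemma dist_twins a b x : twins e a b -> x != a -> x != b ->
  dist e x a = dist e x b.
Proof.
move=> tw xa xb; apply: eq_find => n.
by apply/idP/idP; [apply: walk_twins | apply/walk_twins/xb/twins_sym].
Qed.

Lemma resolving_twins W a b : resolving e W -> twins e a b -> (a \in W) || (b \in W).
Proof.
move=> res tw; have [w wW] := res a b tw.1.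
have [<- | wa] := eqVneq w a; first by rewrite wW.
have [<- | wb] := eqVneq w b; first by rewrite wW orbT.
by rewrite dist_sym [dist e b w]dist_sym (dist_twins tw) ?eqxx.
Qed.

Lemma wtr_pair_twin u v b : weak_total_resolving e [set u; v] -> twins e u b -> b = v.
Proof.
move=> [_ wtr] tw; apply/eqP/negP => /negP bv.
have bW : b \notin [set u; v] by rewrite !inE negb_or eq_sym tw.1 bv.
have [w'] := wtr u b (set21 u v) bW.
rewrite !inE => /andP [w'u /orP [/eqP w'e | /eqP w'e]]; subst w'.
  by rewrite eqxx in w'u.
by rewrite (dist_sym b) (dist_sym u) (dist_twins tw) ?eqxx // eq_sym.
Qed.

Section TwinPair.
Variables u v : T.
Hypothesis tw : twins e u v.

Local Notation outside y := (y \notin [set u; v]).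

Lemma outsideE y : outside y = (y != u) && (y != v).
Proof. by rewrite !inE negb_or. Qed.

Lemma outside_dist_gt0 y : outside y -> 0 < dist e y u.
Proof. by rewrite outsideE lt0n dist_eq0 => /andP []. Qed.

Lemma outside_dist_layer k n y : outside y -> dist e y u = k.+1 + n ->
  exists2 z, outside z & dist e z u = k.+1.
Proof.
elim: n y => [|n IH] y yW dy; first by exists y; rewrite // addn0 in dy.
have [z eyz dz] := dist_pred_adj (etrans dy (addnS _ _)).
apply: (IH z) => //; rewrite outsideE; apply/andP; split.
  by apply/eqP => zu; rewrite zu dist_xx in dz.
apply/eqP => zv; rewrite {z}zv in eyz dz.
have yu : y != u by move: yW; rewrite outsideE => /andP [].
have euy : e u y by apply: (twins_adj (twins_sym tw)); rewrite // sym.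
by move: euy; rewrite sym => /(dist_adj_le u); rewrite dy dist_xx; lia.
Qed.

Hypothesis wtr : weak_total_resolving e [set u; v].

Lemma outside_dist_inj y z : outside y -> outside z -> y != z ->
  dist e y u != dist e z u.
Proof.
rewrite !outsideE => /andP [yu yv] /andP [zu zv] yz.
have [w] := wtr.1 y z yz; rewrite !inE => /orP [/eqP -> // | /eqP ->].
by rewrite -(dist_twins tw yu yv) -(dist_twins tw zu zv).
Qed.

Lemma outside_dist_neq y : outside y -> dist e y u != dist e v u.
Proof.
move=> yW; have [w'] := wtr.2 v y (set22 u v) yW.
by rewrite !inE => /andP [w'v /orP [/eqP -> // | /eqP w'e]]; rewrite w'e eqxx in w'v.
Qed.

Lemma twin_pair_card : #|T| <= 3.
Proof.
rewrite leqNgt; apply/negP => card4.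
have : 1 < #|~: [set u; v]|.
  by have := cardsC [set u; v]; rewrite cards2 tw.1; lia.
case/card_gt1P => y [z []]; rewrite !in_setC => yW zW yz.
have [x xW dx] : exists2 x, outside x & 1 < dist e x u.
  have := outside_dist_inj yW zW yz.
  have := outside_dist_gt0 yW; have := outside_dist_gt0 zW.
  by case: (ltnP 1 (dist e y u)) => [|? ? ? ?]; [exists y | exists z => //; lia].
have [y1 y1W d1] := @outside_dist_layer 0 (dist e x u - 1) x xW ltac:(lia).
have [y2 y2W d2] := @outside_dist_layer 1 (dist e x u - 2) x xW ltac:(lia).
have evy1 : e v y1.
  apply: (twins_adj tw); last by rewrite sym dist_eq1.
  by move: y1W; rewrite outsideE => /andP [].
have := dist_adj_le u evy1; rewrite d1.
have := outside_dist_neq y1W; have := outside_dist_neq y2W; rewrite d1 d2.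
have : 0 < dist e v u by rewrite lt0n dist_eq0 eq_sym tw.1.
lia.
Qed.

End TwinPair.

Lemma wtr_pair_twin_free u v a b : 4 <= #|T| ->
  weak_total_resolving e [set u; v] -> ~ twins e a b.
Proof.
move=> card4 wtr tw.
wlog aW : a b tw / a \in [set u; v].
  move=> hw; case/orP: (resolving_twins wtr.1 tw); first exact: hw _ _ tw.
  exact: hw _ _ (twins_sym tw).
wlog au : u v wtr aW / a = u.
  move=> hw; have := aW; rewrite !inE => /orP [/eqP | /eqP av].
    exact: hw _ _ wtr aW.
  by apply: (hw v u _ _ av); rewrite setUC.
subst a; have bv := wtr_pair_twin wtr tw; subst b.
by have := twin_pair_card tw wtr; lia.
Qed.

End GraphDistance.

Theorem proposition4 (T : finType) (e : rel T) (u v : T) :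
  simple_graph e -> connected_graph e -> 4 <= #|T| ->
  is_wt_dim e 2 -> u != v -> wt_metric_basis e [set u; v] ->
  ~ twins e u v /\ (forall x : T, ~ is_twin e x).
Proof.
move=> [sym _] conn card4 _ _ [wtr _].
have twin_free := wtr_pair_twin_free sym conn card4 wtr.
by split=> [|x [y]]; apply: twin_free.
Qed.
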